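(* Let $G$ be a graph of girth at least five and maximum average degree $d\ge2$. Every fractional $2$-guidance system and every weak $2$-guidance system of $G$ has maximum outdegree at least $d/2$.
   Context: All graphs are finite, simple and undirected. The maximum average degree of $G$ is the maximum average degree of its subgraphs. For $u,v$ at distance $\ell$, $\Gamma_G(u,v)$ is the set of neighbors of $u$ at distance $\ell-1$ from $v$. A partial orientation of $G$ is a directed graph $\vec{H}$ on $V(G)$ with every $(u,v)\in E(\vec{H})$ satisfying $uv\in E(G)$. $B_{\vec{H}}(v,a)$ is the set of vertices reachable from $v$ by a directed path of length at most $a$. A weak $r$-guidance system is a partial orientation $\vec{H}$ such that for any distinct $u,v$ at distance $\ell\le r$ there exist non-negative integers $a,b$ with $a+b=\ell-1$ such that $G$ has an edge between $B_{\vec{H}}(u,a)$ and $B_{\vec{H}}(v,b)$. A fractional orientation assigns a non-negative real $p(u,v)$ to each ordered pair of adjacent vertices; its maximum outdegree is $\max_u\sum_{v:uv\in E(G)}p(u,v)$. A fractional $r$-guidance system is a fractional orientation with $\sum_{y\in\Gamma_G(u,v)}p(u,y)+\sum_{y\in\Gamma_G(v,u)}p(v,y)\ge1$ for all $u,v$ at distance between $2$ and $r$. *)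

(* Simple graph: symmetric irreflexive relation e on a finType T. *)
From mathcomp Require Import all_boot all_order all_algebra.
Set Implicit Arguments. Unset Strict Implicit. Unset Printing Implicit Defensive.
Import Order.TTheory GRing.Theory Num.Theory.
Local Open Scope ring_scope.

Section Graphs.
Variable T : finType.

Definition is_walk (e : rel T) (u v : T) (n : nat) : bool :=
  [exists t : n.-tuple T, path e u t && (last u t == v)].

Definition dist_eq (e : rel T) (u v : T) (l : nat) : bool :=
  is_walk e u v l && [forall m : 'I_l, ~~ is_walk e u v m].

Definition girth_ge (e : rel T) (g : nat) : Prop :=
  forall c : seq T, ucycle e c -> (3 <= size c)%N -> (g <= size c)%N.

Definition is_subgraph (e : rel T) (S : {set T}) (f : rel T) : Prop :=
  symmetric f /\ forall x y, f x y -> [&& e x y, x \in S & y \in S].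

Definition avg_deg (R : numFieldType) (S : {set T}) (f : rel T) : R :=
  (\sum_(x in S) #|[set y | f x y]|)%:R / #|S|%:R.

Definition is_mad (R : numFieldType) (e : rel T) (d : R) : Prop :=
  (exists S f, S != set0 /\ is_subgraph e S f /\ avg_deg R S f = d) /\
  (forall S f, S != set0 -> is_subgraph e S f -> avg_deg R S f <= d).

Definition Gamma (e : rel T) (l : nat) (u v : T) : {set T} :=
  [set y | e u y & dist_eq e y v l.-1].

Definition partial_orientation (e : rel T) (h : rel T) : Prop :=
  forall u v, h u v -> e u v.

Definition outdeg (h : rel T) (u : T) : nat := #|[set v | h u v]|.
Definition max_outdeg (h : rel T) : nat := \max_(u : T) outdeg h u.

Definition Ball (h : rel T) (v : T) (a : nat) : {set T} :=
  [set w | [exists k : 'I_a.+1, is_walk h v w k]].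

Definition weak_guidance (e : rel T) (r : nat) (h : rel T) : Prop :=
  forall u v l, u != v -> dist_eq e u v l -> (l <= r)%N ->
    exists a b, (a + b = l.-1)%N /\
      exists x y, [/\ x \in Ball h u a, y \in Ball h v b & e x y].

Definition frac_orientation (R : numDomainType) (e : rel T) (p : T -> T -> R) : Prop :=
  forall u v, e u v -> 0 <= p u v.

Definition frac_outdeg (R : numDomainType) (e : rel T) (p : T -> T -> R) (u : T) : R :=
  \sum_(v | e u v) p u v.

Definition frac_max_outdeg (R : realDomainType) (e : rel T) (p : T -> T -> R) : R :=
  \big[Num.max/0]_(u : T) frac_outdeg e p u.

Definition frac_guidance (R : numDomainType) (e : rel T) (r : nat) (p : T -> T -> R) : Prop :=
  forall u v l, dist_eq e u v l -> (2 <= l)%N -> (l <= r)%N ->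
    1 <= \sum_(y in Gamma e l u v) p u y + \sum_(y in Gamma e l v u) p v y.

End Graphs.

From mathcomp Require Import all_boot all_order all_algebra.
From mathcomp Require Import ring lra zify.
Set Implicit Arguments.
Unset Strict Implicit.
Unset Printing Implicit Defensive.
Import Order.TTheory GRing.Theory Num.Theory.
Local Open Scope ring_scope.

(* In a graph of girth at least five, two distinct neighbours u, v of a vertex y
   are at distance two and y is their only common neighbour, so Gamma(u, v) = {y}:
   a fractional or weak 2-guidance system must put total weight at least 1 on the
   two arcs u -> y and v -> y of every such cherry u - y - v.  At a vertex y of
   degree k >= 2 these pairwise constraints force weight at least k/2 on the arcs
   entering y.  In a subgraph of average degree d >= 2 we may delete vertices of
   degree at most one without lowering the average degree below d; once the
   minimum degree is two, summing over y shows that the total out-weight is at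
   least half the degree sum, so some vertex has out-weight at least d/2. *)

Section Walks.
Variables (T : finType) (e : rel T).

Lemma is_walk0 u v : is_walk e u v 0 = (u == v).
Proof.
apply/existsP/idP => [[t]|/eqP<-]; last by exists [tuple]; rewrite /= eqxx.
by rewrite tuple0 /= => /eqP->.
Qed.

Lemma is_walk1 u v : is_walk e u v 1 = e u v.
Proof.
apply/existsP/idP => [[t]|euv]; last by exists [tuple v]; rewrite /= euv eqxx.
by case: t => [[|x [|y s]] //= _]; rewrite andbT => /andP[? /eqP <-].
Qed.

Lemma is_walk2 u y v : e u y -> e y v -> is_walk e u v 2.
Proof.
by move=> euy eyv; apply/existsP; exists [tuple y; v]; rewrite /= euy eyv eqxx.
Qed.

Lemma mem_Ball0 u x : (x \in Ball e u 0) = (x == u).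
Proof.
apply/idP/eqP => [|->]; last by rewrite inE; apply/existsP; exists ord0; rewrite is_walk0.
by rewrite inE => /existsP[[[|k] //= _]]; rewrite is_walk0 eq_sym => /eqP.
Qed.

Lemma mem_Ball1 u x : (x \in Ball e u 1) = (x == u) || e u x.
Proof.
rewrite inE; apply/existsP/idP => [[[[|[|k]] //= _]]|/orP[/eqP->|eux]].
- by rewrite is_walk0 eq_sym => ->.
- by rewrite is_walk1 orbC => ->.
- by exists ord0; rewrite is_walk0.
- by exists ord_max; rewrite is_walk1.
Qed.

End Walks.

Definition covers_cherries (R : numDomainType) (T : finType) (e : rel T)
    (q : T -> T -> R) : Prop :=
  forall y u v, e y u -> e y v -> u != v -> 1 <= q u y + q v y.

Section Girth5.
Variables (T : finType) (e : rel T).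
Hypotheses (e_sym : symmetric e) (e_irr : irreflexive e) (e_girth : girth_ge e 5).

Lemma edge_neq a b : e a b -> a != b.
Proof. by apply: contraTneq => ->; rewrite e_irr. Qed.

Lemma girth5_nonadj y u v : e y u -> e y v -> u != v -> ~~ e u v.
Proof.
move=> eyu eyv uv; apply/negP => euv.
have := @e_girth [:: u; y; v]; rewrite /ucycle /= !inE (e_sym u) (e_sym v) eyu eyv euv.
by rewrite !negb_or uv [u == y]eq_sym !edge_neq // => /(_ isT isT).
Qed.

Lemma girth5_common_nbr_uniq y w u v :
  e y u -> e y v -> e w u -> e w v -> u != v -> w = y.
Proof.
move=> eyu eyv ewu ewv uv; apply/eqP/negPn/negP => wy.
have := @e_girth [:: u; y; v; w]; rewrite /ucycle /= !inE !negb_or.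
rewrite (e_sym u) (e_sym v) eyu eyv ewu ewv uv [y == w]eq_sym wy.
by rewrite [u == y]eq_sym [u == w]eq_sym [v == w]eq_sym !edge_neq // => /(_ isT isT).
Qed.

Lemma girth5_dist2 y u v : e y u -> e y v -> u != v -> dist_eq e u v 2.
Proof.
move=> eyu eyv uv; rewrite /dist_eq (@is_walk2 _ e u y v) ?(e_sym u) //=.
apply/forallP => -[[|[|m]] //= _]; first by rewrite is_walk0.
by rewrite is_walk1 (girth5_nonadj eyu eyv uv).
Qed.

Lemma girth5_Gamma2 y u v : e y u -> e y v -> u != v -> Gamma e 2 u v = [set y].
Proof.
move=> eyu eyv uv; apply/setP => z; rewrite !inE.
apply/andP/eqP => [[euz /andP[ezv _]]|->].
  by rewrite is_walk1 in ezv; rewrite (girth5_common_nbr_uniq eyu eyv _ ezv uv) // e_sym.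
split; first by rewrite e_sym.
rewrite /dist_eq is_walk1 eyv; apply/forallP => -[[|m] //= _].
by rewrite is_walk0 edge_neq.
Qed.

Lemma frac_guidance2_covers (R : numDomainType) (p : T -> T -> R) :
  frac_guidance e 2 p -> covers_cherries e p.
Proof.
move=> guide y u v eyu eyv uv.
have := guide u v 2 (girth5_dist2 eyu eyv uv) isT isT.
by rewrite (girth5_Gamma2 eyu eyv uv) (girth5_Gamma2 eyv eyu) 1?eq_sym // !big_set1.
Qed.

Lemma cherry_leaf_arc (h : rel T) y u v z : partial_orientation e h ->
  e y u -> e y v -> u != v -> z \in Ball h v 1 -> e u z -> h v y.
Proof.
move=> ho eyu eyv uv; rewrite mem_Ball1 => /orP[/eqP->|hvz] euz.
  by rewrite (negbTE (girth5_nonadj eyu eyv uv)) in euz.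
have ezu : e z u by rewrite e_sym.
have ezv : e z v by rewrite e_sym; apply: ho.
by rewrite -(girth5_common_nbr_uniq eyu eyv ezu ezv uv).
Qed.

Lemma weak_guidance2_orients_cherries (h : rel T) :
  partial_orientation e h -> weak_guidance e 2 h ->
  forall y u v, e y u -> e y v -> u != v -> h u y || h v y.
Proof.
move=> ho guide y u v eyu eyv uv.
have [[|[|a]] [[|[|b]] [//= _ [x [z [xB zB exz]]]]]] :=
  guide u v 2 uv (girth5_dist2 eyu eyv uv) isT.
- rewrite mem_Ball0 in xB; rewrite (eqP xB) in exz.
  by rewrite (cherry_leaf_arc ho eyu eyv uv zB exz) orbT.
- rewrite mem_Ball0 in zB; rewrite (eqP zB) e_sym in exz.
  by rewrite (cherry_leaf_arc ho eyv eyu _ xB exz) // eq_sym.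
Qed.

Lemma weak_guidance2_covers (R : numDomainType) (h : rel T) :
  partial_orientation e h -> weak_guidance e 2 h ->
  covers_cherries e (fun a b => (h a b)%:R : R).
Proof.
move=> ho guide y u v eyu eyv uv.
by case/orP: (weak_guidance2_orients_cherries ho guide eyu eyv uv) => ->;
  rewrite ?lerDl ?lerDr.
Qed.

End Girth5.

Lemma pairwise_cover_card_le (R : realFieldType) (T : finType) (N : {set T})
    (a : T -> R) :
  (2 <= #|N|)%N -> {in N &, forall u v, u != v -> 1 <= a u + a v} ->
  #|N|%:R <= 2 * \sum_(u in N) a u.
Proof.
move=> N2 cover; set k : R := #|N|%:R; set A := \sum_(u in N) a u.
have k2 : 2 <= k by rewrite (ler_nat R 2).
have row u : u \in N -> k - 1 <= \sum_(v in N) (a u + a v) - 2 * a u.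
  move=> uN; rewrite (bigD1 u uN) /= addrAC -mulr2n mulr_natl subrr add0r.
  have -> : k - 1 = \sum_(v in N | v != u) 1.
    rewrite sumr_const /k (cardsD1 u N) uN natrD addrAC subrr add0r.
    by congr _%:R; apply: eq_card => v; rewrite !inE andbC.
  by apply: ler_sum => v /andP[vN vu]; apply: cover; rewrite // eq_sym.
have total : \sum_(u in N) \sum_(v in N) (a u + a v) = 2 * k * A.
  under eq_bigr do rewrite big_split /= sumr_const.
  by rewrite big_split /= sumr_const sumrMnl -[_ *+ #|N|]mulr_natl /k /A; ring.
have : \sum_(u in N) (k - 1) <= 2 * k * A - 2 * A.
  by rewrite -total /A mulr_sumr -sumrB; apply: ler_sum.
rewrite sumr_const -[(k - 1) *+ _]mulr_natr -/k => sum_rows.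
have : 0 <= (k - 1) * (2 * A - k) by nra.
by rewrite pmulr_rge0 ?subr_ge0; lra.
Qed.

Section DegreeSums.
Variables (T : finType) (e : rel T).
Hypothesis e_irr : irreflexive e.

Definition deg_sum (S : {set T}) (f : rel T) : nat := \sum_(x in S) outdeg f x.

Definition del_vertex (f : rel T) (x : T) : rel T :=
  [rel a b | [&& f a b, a != x & b != x]].

Variables (S : {set T}) (f : rel T).
Hypothesis f_sub : is_subgraph e S f.

Lemma subgraph_nbr x y : f x y -> y \in S :\ x.
Proof.
case: f_sub => _ /(_ x y) fxy /fxy /and3P[exy _ yS].
by rewrite !inE yS andbT; apply: contraTneq exy => ->; rewrite e_irr.
Qed.

Lemma outdeg_subgraph_le x : (outdeg f x <= #|S :\ x|)%N.
Proof. by apply/subset_leq_card/subsetP => y; rewrite inE; apply: subgraph_nbr. Qed.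

Lemma subgraph_del_vertex x : is_subgraph e (S :\ x) (del_vertex f x).
Proof.
case: f_sub => f_sym f_in; split=> [a b|a b /and3P[fab ax bx]] /=.
  by rewrite /del_vertex /= f_sym [(a != x) && _]andbC.
by case/and3P: (f_in a b fab) => -> aS bS; rewrite !inE ax bx aS bS.
Qed.

Lemma deg_sum_del_vertex x : x \in S ->
  deg_sum S f = (deg_sum (S :\ x) (del_vertex f x) + (outdeg f x).*2)%N.
Proof.
move=> xS; have [f_sym _] := f_sub.
have split_deg a : a \in S :\ x ->
    outdeg f a = (outdeg (del_vertex f x) a + f x a)%N.
  rewrite !inE => /andP[ax _]; rewrite /outdeg (cardsD1 x) inE f_sym addnC.
  by congr (_ + _)%N; apply: eq_card => b; rewrite !inE /del_vertex /= ax andbC.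
have back_arcs : (\sum_(a in S :\ x) (f x a : nat))%N = outdeg f x.
  rewrite /outdeg -sum1_card [RHS](eq_bigl (fun a => (a \in S :\ x) && f x a)) => [|a].
    by rewrite [RHS]big_mkcondr; apply: eq_bigr => a _; case: (f x a).
  by rewrite inE; case fxa: (f x a); rewrite ?andbF // andbT (subgraph_nbr fxa).
rewrite /deg_sum (bigD1 x xS) /= (eq_bigl (mem (S :\ x))) => [|a]; last first.
  by rewrite !inE andbC.
by rewrite (eq_bigr _ split_deg) big_split /= back_arcs -addnn; lia.
Qed.

End DegreeSums.

Section HeavyVertex.
Variables (R : realFieldType) (T : finType) (e : rel T) (q : T -> T -> R).
Hypotheses (e_irr : irreflexive e) (q_ge0 : frac_orientation e q)
  (q_cover : covers_cherries e q).

Lemma deg_sum_le_weight S f : is_subgraph e S f ->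
  {in S, forall y, 2 <= outdeg f y}%N ->
  (deg_sum S f)%:R <= 2 * \sum_(u in S) frac_outdeg e q u.
Proof.
move=> [f_sym f_in] deg_ge2.
have f_e a b : f a b -> e a b by case/f_in/and3P.
have f_S a b : f a b -> b \in S by case/f_in/and3P.
have at_vertex y : y \in S -> (outdeg f y)%:R <= 2 * \sum_(u | f y u) q u y.
  move=> yS; rewrite (eq_bigl (fun u => u \in [set u | f y u])) => [|u]; last first.
    by rewrite inE.
  apply: pairwise_cover_card_le (deg_ge2 y yS) _ => u v; rewrite !inE => fyu fyv.
  exact: q_cover (f_e _ _ fyu) (f_e _ _ fyv).
have swap : \sum_(y in S) \sum_(u | f y u) q u y = \sum_(u in S) \sum_(y | f u y) q u y.
  rewrite (exchange_big_dep (mem S)) /= => [|y u _ /f_S //].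
  by apply: eq_bigr => u _; apply: eq_bigl => y; rewrite f_sym andb_idl // => /f_S.
rewrite natr_sum (le_trans (ler_sum _ at_vertex)) // -mulr_sumr swap ler_pM2l //.
apply: ler_sum => u _; rewrite /frac_outdeg [leRHS]big_mkcond [leLHS]big_mkcond.
apply: ler_sum => y _; case fuy: (f u y); first by rewrite f_e.
by case: ifP => // /q_ge0.
Qed.

Variable d : R.
Hypotheses (d_ge2 : 2 <= d) (light : forall u, frac_outdeg e q u < d / 2).

Lemma deg_sum_lt_light S f : is_subgraph e S f -> S != set0 ->
  (deg_sum S f)%:R < d * #|S|%:R.
Proof.
have [n] := ubnP #|S|; elim: n S f => // n IH S f /ltnSE Sn f_sub Sn0.
case: (boolP [exists x in S, outdeg f x <= 1]%N) => [/exists_inP[x xS deg_x]|].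
  rewrite (deg_sum_del_vertex e_irr f_sub xS) (cardsD1 x S) xS !natrD mulrDr mulr1.
  have deg2_x : ((outdeg f x).*2%:R : R) <= 2 by rewrite -muln2 (ler_nat R _ 2); lia.
  have [Sx0|Sxn0] := eqVneq (S :\ x) set0.
    have := outdeg_subgraph_le e_irr f_sub x.
    rewrite Sx0 cards0 leqn0 => /eqP->.
    by rewrite /deg_sum big_set0 /= mulr0 !addr0 (lt_le_trans _ d_ge2).
  have Sx_lt : (#|S :\ x| < n)%N by rewrite (cardsD1 x S) xS in Sn.
  have := IH (S :\ x) _ Sx_lt (subgraph_del_vertex f_sub x) Sxn0.
  by rewrite addrC; apply: ler_ltD; apply: le_trans d_ge2.
move/exists_inPn => deg_ge2.
apply: (le_lt_trans (deg_sum_le_weight f_sub _)) => [y yS|].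
  by rewrite ltnNge (deg_ge2 y yS).
have : \sum_(u in S) frac_outdeg e q u < \sum_(u in S) (d / 2).
  apply: ltr_sum => //; case/set0Pn: Sn0 => x xS; apply/hasP; exists x => //.
rewrite sumr_const -mulr_natr; lra.
Qed.

End HeavyVertex.

Lemma half_mad_le_frac_max_outdeg (R : realFieldType) (T : finType) (e : rel T)
    (q : T -> T -> R) (d : R) :
  irreflexive e -> frac_orientation e q -> covers_cherries e q ->
  is_mad e d -> 2 <= d -> d / 2 <= frac_max_outdeg e q.
Proof.
move=> e_irr q_ge0 q_cover [[S [f [Sn0 [f_sub avg]]]] _] d_ge2.
case: (boolP [exists u, d / 2 <= frac_outdeg e q u]).
  by case/existsP=> u heavy; apply: le_trans heavy (le_bigmax _ _ u).
move/existsPn=> light.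
have {}light u : frac_outdeg e q u < d / 2 by rewrite ltNge light.
have := deg_sum_lt_light e_irr q_ge0 q_cover d_ge2 light f_sub Sn0.
by rewrite -[X in _ < X * _]avg /avg_deg divfK ?ltxx // pnatr_eq0 cards_eq0.
Qed.

Lemma frac_outdeg_indicator (R : numDomainType) (T : finType) (e h : rel T) u :
  partial_orientation e h ->
  frac_outdeg e (fun a b => (h a b)%:R : R) u = (outdeg h u)%:R.
Proof.
move=> ho; rewrite /frac_outdeg /outdeg -sum1_card natr_sum.
rewrite [RHS](eq_bigl (fun v => e u v && h u v)) => [|v]; last first.
  by rewrite inE; case huv: (h u v); rewrite ?andbF // andbT ho.
by rewrite big_mkcondr; apply: eq_bigr => v _; case: (h u v).
Qed.

Theorem lemma29 (R : realFieldType) (T : finType) (e : rel T) (d : R) :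
  symmetric e -> irreflexive e -> girth_ge e 5 -> is_mad e d -> 2 <= d ->
  (forall p : T -> T -> R, frac_orientation e p -> frac_guidance e 2 p ->
     d / 2 <= frac_max_outdeg e p) /\
  (forall h : rel T, partial_orientation e h -> weak_guidance e 2 h ->
     d / 2 <= (max_outdeg h)%:R).
Proof.
move=> e_sym e_irr e_girth mad d_ge2; split=> [p p_ge0 guide | h ho guide].
  have p_cover := frac_guidance2_covers e_sym e_irr e_girth guide.
  exact: half_mad_le_frac_max_outdeg p_ge0 p_cover mad d_ge2.
have h_ge0 : frac_orientation e (fun a b => (h a b)%:R : R) by move=> *; apply: ler0n.
have h_cover := weak_guidance2_covers e_sym e_irr e_girth R ho guide.
have := half_mad_le_frac_max_outdeg e_irr h_ge0 h_cover mad d_ge2.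
move/le_trans; apply; apply: bigmax_le => [|u _]; first exact: ler0n.
by rewrite frac_outdeg_indicator // ler_nat; apply: leq_bigmax.
Qed.
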